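(* If $n\ge 0$ is an integer such that $B_{n+1}(t)-B_n(t)$ is a constant polynomial, then $n=2^{m}-2$ for some integer $m\ge 1$, and in that case $B_{n+1}(t)-B_n(t)=1$.
   Context: The Stern polynomials $B_n(t)\in\mathbb{Z}[t]$, $n\ge 0$, are defined by $B_0(t)=0$, $B_1(t)=1$, $B_{2n}(t)=tB_n(t)$ and $B_{2n+1}(t)=B_n(t)+B_{n+1}(t)$ for $n\ge 1$. *)

From mathcomp Require Import all_boot all_order all_algebra.
Set Implicit Arguments. Unset Strict Implicit. Unset Printing Implicit Defensive.
Import GRing.Theory.
Local Open Scope ring_scope.

(* Fuel-based recursion: stern_fuel k n = B_n whenever n <= k. *)
Fixpoint stern_fuel (k : nat) (n : nat) : {poly int} :=
  match k with
  | 0%N => 0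
  | k'.+1 =>
    if n == 0%N then 0
    else if n == 1%N then 1
    else if ~~ odd n then 'X * stern_fuel k' n./2
    else stern_fuel k' n./2 + stern_fuel k' (n./2).+1
  end.

Definition stern (n : nat) : {poly int} := stern_fuel n n.

Lemma stern0 : stern 0 = 0. Proof. by []. Qed.
Lemma stern1 : stern 1 = 1. Proof. by []. Qed.

Example stern_test :
  [/\ stern 2 = 'X * 1, stern 3 = 1 + 'X * 1, stern 5 = 'X * 1 + (1 + 'X * 1)
    & stern 6 = 'X * (1 + 'X * 1)].
Proof. split; reflexivity. Qed.

(* Three evaluations of
   the Stern polynomials determine everything:
   - at t = 2 one gets B_n(2) = n, hence c = (n+1) - n = 1;
   - at t = 0 one gets B_n(0) = odd n, hence odd (n+1) - odd n = 1 and n is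
     even;
   - at t = 1 one gets the Stern diatomic sequence s(n) = B_n(1), which is
     positive for n >= 1 and equals 1 only at powers of 2.
   Writing n = 2h with h >= 1, the recursion gives
   B_{2h+1} - B_{2h} = B_h + B_{h+1} - t B_h, whose value at 1 is s(h+1); so
   s(h+1) = 1, h + 1 = 2^j and n = 2^(j+1) - 2 (the case n = 0 is m = 1). *)
From mathcomp Require Import all_boot all_order all_algebra.
From mathcomp Require Import zify lra.
Import GRing.Theory Num.Theory.
Local Open Scope ring_scope.

Lemma stern_nat_ind (P : nat -> Prop) :
  P 0%N -> P 1%N ->
  (forall i, (1 <= i)%N -> P i -> P (2 * i)%N) ->
  (forall i, (1 <= i)%N -> P i -> P i.+1 -> P (2 * i).+1%N) ->
  forall n, P n.
Proof.
move=> P0 P1 Peven Podd; elim/ltn_ind => n IH.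
case: n IH => [|[|n]] IH //.
have := odd_double_half n.+2; rewrite -muln2 mulnC.
case: (odd _) => /= Hd; rewrite -Hd.
- by apply: Podd; [lia | apply: IH; lia | apply: IH; lia].
- by apply: Peven; [lia | apply: IH; lia].
Qed.

Lemma stern_fuel_stable k k' n : (n <= k)%N -> (n <= k')%N ->
  stern_fuel k n = stern_fuel k' n.
Proof.
elim: k k' n => [|k IH] [|k'] n; rewrite ?leqn0.
- by [].
- by move=> /eqP ->.
- by move=> _ /eqP ->.
move=> Hk Hk' /=; case: eqP => // n0; case: eqP => // n1.
have := odd_double_half n; rewrite -muln2.
by case: (odd n) => /= Hd; rewrite (IH k') ?(IH k' (n./2).+1) //; lia.
Qed.

Lemma stern_fuelE k n : (n <= k)%N -> stern_fuel k n = stern n.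
Proof. by move=> Hk; apply: stern_fuel_stable. Qed.

Lemma stern_fuelS k n : stern_fuel k.+1 n =
  if n == 0%N then 0 else if n == 1%N then 1
  else if ~~ odd n then 'X * stern_fuel k n./2
  else stern_fuel k n./2 + stern_fuel k n./2.+1.
Proof. by []. Qed.

Lemma sternE n : (2 <= n)%N ->
  stern n = if odd n then stern n./2 + stern n./2.+1 else 'X * stern n./2.
Proof.
case: n => [|[|[|k]]] // _.
by rewrite [LHS]/stern stern_fuelS !stern_fuelE; [case: (odd k.+3) | lia ..].
Qed.

Lemma stern_even h : (1 <= h)%N -> stern (2 * h) = 'X * stern h.
Proof.
move=> h_gt0; rewrite sternE ?oddM /=; last by lia.
by rewrite mul2n doubleK.
Qed.

Lemma stern_odd h : (1 <= h)%N -> stern (2 * h).+1 = stern h + stern h.+1.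
Proof.
move=> h_gt0; rewrite sternE /= ?oddM; last by lia.
by rewrite mulnC muln2 uphalf_double.
Qed.

Lemma stern_at2 n : (stern n).[2] = n%:R.
Proof.
elim/stern_nat_ind: n => [||i i_gt0 IH|i i_gt0 IH IH1]; rewrite ?hornerC //.
- by rewrite stern_even // hornerM hornerX IH natrM.
- by rewrite stern_odd // hornerD IH IH1 -natrD; congr _%:R; lia.
Qed.

Lemma stern_at0 n : (stern n).[0] = (odd n)%:R.
Proof.
elim/stern_nat_ind: n => [||i i_gt0 IH|i i_gt0 IH IH1]; rewrite ?hornerC //.
- by rewrite stern_even // hornerM hornerX mul0r oddM.
- by rewrite stern_odd // hornerD IH IH1 /= oddM /=; case: (odd i).
Qed.

Lemma stern_at1_pos {n} : (1 <= n)%N -> 1 <= (stern n).[1].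
Proof.
elim/stern_nat_ind: n => [||i i_gt0 IH|i i_gt0 IH IH1] // n_gt0.
- by rewrite hornerC.
- by rewrite stern_even // hornerM hornerX mul1r; apply: IH.
- rewrite stern_odd // hornerD; have := IH i_gt0; have := IH1 isT; lra.
Qed.

(* ... and equal to 1 only at powers of 2, since s(2i+1) = s(i) + s(i+1) >= 2. *)
Lemma stern_at1_eq1 n : (1 <= n)%N -> (stern n).[1] = 1 ->
  exists j, n = (2 ^ j)%N.
Proof.
elim/stern_nat_ind: n => [||i i_gt0 IH|i i_gt0 _ _] // n_gt0.
- by exists 0%N.
- rewrite stern_even // hornerM hornerX mul1r => /(IH i_gt0) [j ->].
  by exists j.+1; rewrite expnS.
- rewrite stern_odd // hornerD.
  have := stern_at1_pos i_gt0; have := stern_at1_pos (ltn0Sn i); lra.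
Qed.

Lemma stern_diff_even_at1 h : (1 <= h)%N ->
  (stern (2 * h).+1 - stern (2 * h)).[1] = (stern h.+1).[1].
Proof.
move=> h_gt0; rewrite stern_odd // stern_even //.
by rewrite hornerD hornerN hornerD hornerM hornerX mul1r addrAC subrr add0r.
Qed.

Theorem theorem5p2 (n : nat) :
  (exists c : int, stern n.+1 - stern n = c%:P) ->
  (exists m : nat, (1 <= m)%N /\ n = (2 ^ m - 2)%N) /\ stern n.+1 - stern n = 1.
Proof.
move=> [c Hc]; have at_c x : (stern n.+1 - stern n).[x] = c by rewrite Hc hornerC.
have c1 : c = 1.
  by rewrite -(at_c 2) hornerD hornerN !stern_at2 -natrB // subSnn.
split; last by rewrite Hc c1.
have n_even : odd n = false.
  by move: (at_c 0); rewrite hornerD hornerN !stern_at0 c1 /=; case: (odd n).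
have n2h : n = (2 * n./2)%N.
  by rewrite -[LHS]odd_double_half n_even add0n -muln2 mulnC.
have [h0 | h_gt0] := posnP n./2; first by exists 1%N; rewrite n2h h0.
have [j hj] : exists j, n./2.+1 = (2 ^ j)%N.
  by apply: stern_at1_eq1 => //; rewrite -stern_diff_even_at1 // -n2h at_c c1.
by exists j.+1; split => //; rewrite expnS -hj; lia.
Qed.
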